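(* Let $G$ be a locally compact group, let $G_e$ be the connected component of the identity, and let $q_e:G\to G/G_e$ be the quotient map (with $G/G_e$ carrying the quotient topology). For $\tau\in\mathcal{T}_{td}(G)$ we have $G_e\subseteq\ker\eta_\tau$, so there is a unique continuous homomorphism $\tilde{\eta}_\tau:G/G_e\to G_\tau$ with $\tilde{\eta}_\tau\circ q_e=\eta_\tau$; let $\tilde{\tau}$ be the coarsest topology on $G/G_e$ making $\tilde{\eta}_\tau$ continuous. Then $\tilde{\tau}\in\mathcal{T}_{td}(G/G_e)$, the map $\tau\mapsto\tilde{\tau}:\mathcal{T}_{td}(G)\to\mathcal{T}_{td}(G/G_e)$ is a semilattice isomorphism (with respect to the operations $\vee$), and $G_\tau=(G/G_e)_{\tilde{\tau}}$ for each $\tau\in\mathcal{T}_{td}(G)$.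
   Context: For a locally compact group $G$ with topology $\tau_G$, $\mathcal{T}(G)$ denotes the set of group topologies $\tau\subseteq\tau_G$ on $G$ (not necessarily Hausdorff) whose completion $G_\tau$ is locally compact; $\eta_\tau:G\to G_\tau$ denotes the natural continuous homomorphism with dense range, and $\tau$ is the topology induced by $\eta_\tau$. For $\tau_1,\tau_2\in\mathcal{T}(G)$, $\tau_1\vee\tau_2$ is the coarsest topology on $G$ making $s\mapsto(\eta_{\tau_1}(s),\eta_{\tau_2}(s)):G\to G_{\tau_1}\times G_{\tau_2}$ continuous; $G_{\tau_1\vee\tau_2}$ is the closure of the image of this map, and $\mathcal{T}(G)$ is a semilattice under $\vee$. $\mathcal{T}_{td}(G)=\{\tau\in\mathcal{T}(G): G_\tau \text{ is totally disconnected}\}$, a subsemilattice of $\mathcal{T}(G)$. *)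

From Stdlib Require Import List.
Set Implicit Arguments.
Unset Strict Implicit.

Record group := Group {
  gcar :> Type;
  gmul : gcar -> gcar -> gcar;
  ginv : gcar -> gcar;
  gone : gcar;
  gmulA : forall x y z, gmul x (gmul y z) = gmul (gmul x y) z;
  gmul1 : forall x, gmul gone x = x;
  gmulV : forall x, gmul (ginv x) x = gone
}.
Arguments gmul {g} _ _.
Arguments ginv {g} _.
Arguments gone {g}.

Definition is_hom (G H : group) (f : G -> H) : Prop :=
  forall x y, f (gmul x y) = gmul (f x) (f y).

Definition topology_on (T : Type) := (T -> Prop) -> Prop.

Definition is_topology (T : Type) (O : topology_on T) : Prop :=
  O (fun _ => True) /\
  (forall U V, O U -> O V -> O (fun x => U x /\ V x)) /\
  (forall (I : Type) (U : I -> T -> Prop),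
      (forall i, O (U i)) -> O (fun x => exists i, U i x)).

Definition coarser (T : Type) (O1 O2 : topology_on T) : Prop :=
  forall U, O1 U -> O2 U.

Definition continuous_map (A B : Type) (OA : topology_on A) (OB : topology_on B)
  (f : A -> B) : Prop :=
  forall V, OB V -> OA (fun a => V (f a)).

Definition initial_top (A B : Type) (f : A -> B) (OB : topology_on B)
  : topology_on A :=
  fun U => exists V, OB V /\ U = (fun a => V (f a)).

Definition prod_top (A B : Type) (OA : topology_on A) (OB : topology_on B)
  : topology_on (A * B) :=
  fun W => forall p, W p -> exists U V, OA U /\ OB V /\ U (fst p) /\ V (snd p) /\
             (forall a b, U a -> V b -> W (a, b)).

Definition quotient_top (A B : Type) (f : A -> B) (OA : topology_on A)
  : topology_on B :=
  fun V => OA (fun a => V (f a)).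

Definition hausdorff (T : Type) (O : topology_on T) : Prop :=
  forall x y, x <> y -> exists U V, O U /\ O V /\ U x /\ V y /\
    (forall z, U z -> V z -> False).

Definition compact_set (T : Type) (O : topology_on T) (K : T -> Prop) : Prop :=
  forall (I : Type) (U : I -> T -> Prop),
    (forall i, O (U i)) -> (forall x, K x -> exists i, U i x) ->
    exists l : list I, forall x, K x -> exists i, In i l /\ U i x.

Definition locally_compact (T : Type) (O : topology_on T) : Prop :=
  forall x, exists U K, O U /\ U x /\ (forall y, U y -> K y) /\ compact_set O K.

Definition connected_set (T : Type) (O : topology_on T) (S : T -> Prop) : Prop :=
  ~ exists U V, O U /\ O V /\ (forall x, S x -> U x \/ V x) /\
      (exists x, S x /\ U x) /\ (exists x, S x /\ V x) /\
      (forall x, S x -> U x -> V x -> False).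

Definition totally_disconnected (T : Type) (O : topology_on T) : Prop :=
  forall S, connected_set O S -> forall x y, S x -> S y -> x = y.

Definition identity_component (G : group) (O : topology_on G) : G -> Prop :=
  fun x => exists S, connected_set O S /\ S gone /\ S x.

Definition dense_range (A B : Type) (OB : topology_on B) (f : A -> B) : Prop :=
  forall V, OB V -> (exists b, V b) -> exists a, V (f a).

Definition group_topology (G : group) (O : topology_on G) : Prop :=
  is_topology O /\
  (forall x y W, O W -> W (gmul x y) ->
     exists U V, O U /\ O V /\ U x /\ V y /\
       (forall a b, U a -> V b -> W (gmul a b))) /\
  continuous_map O O (@ginv G).

Record topgroup := TopGroup {
  tgrp :> group;
  topen : topology_on tgrp
}.
Arguments TopGroup {tgrp} _.
Arguments topen _ : clear implicits.

Definition lc_group (H : topgroup) : Prop :=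
  group_topology (topen H) /\ hausdorff (topen H) /\ locally_compact (topen H).

(** (H, eta) is the completion G_tau of (G, tau) when the latter is locally
    compact: H is a locally compact (Hausdorff) group, eta : G -> H is a
    continuous homomorphism with dense range, and tau is the topology induced
    by eta. *)
Definition is_lc_completion (G : group) (tau : topology_on G)
  (H : topgroup) (eta : G -> H) : Prop :=
  lc_group H /\ is_hom eta /\ continuous_map tau (topen H) eta /\
  dense_range (topen H) eta /\ tau = initial_top eta (topen H).
Arguments is_lc_completion {G} tau H eta.

Definition calT (G : group) (tauG : topology_on G) (tau : topology_on G) : Prop :=
  group_topology tau /\ coarser tau tauG /\
  exists (H : topgroup) (eta : G -> H), is_lc_completion tau H eta.

Definition calT_td (G : group) (tauG : topology_on G) (tau : topology_on G) : Prop :=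
  group_topology tau /\ coarser tau tauG /\
  exists (H : topgroup) (eta : G -> H), is_lc_completion tau H eta /\
    totally_disconnected (topen H).

(** tau1 \/ tau2: the coarsest topology on G making
    s |-> (s, s) : G -> (G,tau1) x (G,tau2) continuous (equivalently, since
    tau_i is induced by eta_i, making s |-> (eta_1 s, eta_2 s) continuous). *)
Definition top_join (T : Type) (O1 O2 : topology_on T) : topology_on T :=
  initial_top (fun s : T => (s, s)) (prod_top O1 O2).

(* A totally disconnected completion kills the identity component: eta_tau is
   continuous for tau_G, so it maps G_e onto a connected set containing 1.
   Hence eta_tau factors through q_e, and tau (the topology induced by
   eta_tau) is the pullback along q_e of tilde tau, which is both the topology
   induced by the factored map and the quotient of tau along q_e. Pullback
   and quotient along the surjection q_e are therefore mutually inverse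
   between T_td(G) and T_td(G/G_e), and pullback commutes with products of
   topologies, hence with joins. *)
From Stdlib Require Import FinFun Classical ClassicalEpsilon
  FunctionalExtensionality PropExtensionality.

Section GroupFacts.
Context {G : group}.

Lemma gmulV_r (x : G) : gmul x (ginv x) = gone.
Proof.
  rewrite <- (gmul1 (gmul x (ginv x))), <- (gmulV (ginv x)) at 1.
  rewrite <- gmulA, (gmulA (ginv x) x (ginv x)), gmulV, gmul1.
  apply gmulV.
Qed.

Lemma gmul1_r (x : G) : gmul x gone = x.
Proof. rewrite <- (gmulV x), gmulA, gmulV_r, gmul1. reflexivity. Qed.

Lemma gmul_cancel_l (a x y : G) : gmul a x = gmul a y -> x = y.
Proof.
  intros e. rewrite <- (gmul1 x), <- (gmul1 y), <- (gmulV a), <- !gmulA, e.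
  reflexivity.
Qed.

End GroupFacts.

Section HomFacts.
Context {G K : group} {f : G -> K} (hf : is_hom f).

Lemma hom1 : f gone = gone.
Proof.
  apply (gmul_cancel_l (f gone)). rewrite <- hf, gmul1, gmul1_r. reflexivity.
Qed.

Lemma homV (x : G) : f (ginv x) = ginv (f x).
Proof. apply (gmul_cancel_l (f x)). rewrite <- hf, !gmulV_r. apply hom1. Qed.

Lemma hom_kernel_of_eq {a b : G} : f a = f b -> f (gmul (ginv a) b) = gone.
Proof. intros e. rewrite hf, <- e, <- hf, gmulV. apply hom1. Qed.

Lemma hom_eq_of_kernel {a b : G} : f (gmul (ginv a) b) = gone -> f a = f b.
Proof.
  intros e. rewrite <- (gmul1_r (f a)), <- e, <- hf, gmulA, gmulV_r, gmul1.
  reflexivity.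
Qed.

End HomFacts.

Lemma topology_ext {T : Type} (O1 O2 : topology_on T) :
  (forall U, O1 U <-> O2 U) -> O1 = O2.
Proof.
  intros h. apply functional_extensionality; intros U.
  apply propositional_extensionality, h.
Qed.

Lemma initial_top_comp {A B C : Type} (f : A -> B) (g : B -> C) (O : topology_on C) :
  initial_top (fun a => g (f a)) O = initial_top f (initial_top g O).
Proof.
  apply topology_ext; intros U; split.
  - intros [W [oW ->]]. exists (fun b => W (g b)). split; [exists W; auto | reflexivity].
  - intros [V [[W [oW ->]] ->]]. exists W; auto.
Qed.

Lemma quotient_initial_top {A B : Type} {f : A -> B} {O : topology_on B} :
  Surjective f -> quotient_top f (initial_top f O) = O.
Proof.
  intros hf. apply topology_ext; intros V; split.
  - intros [W [oW e]]. replace V with W; [exact oW |].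
    apply functional_extensionality; intros b. destruct (hf b) as [a <-].
    symmetry. exact (equal_f e a).
  - intros oV. exists V; auto.
Qed.

Lemma prod_top_initial {A1 A2 B1 B2 : Type} (f1 : A1 -> B1) (f2 : A2 -> B2)
  (O1 : topology_on B1) (O2 : topology_on B2) :
  prod_top (initial_top f1 O1) (initial_top f2 O2) =
  initial_top (fun p => (f1 (fst p), f2 (snd p))) (prod_top O1 O2).
Proof.
  apply topology_ext; intros W; split.
  - intros hW.
    exists (fun q => exists U V, O1 U /\ O2 V /\ U (fst q) /\ V (snd q) /\
              forall a b, U (f1 a) -> V (f2 b) -> W (a, b)).
    split.
    + intros q [U [V [oU [oV [Uq [Vq h]]]]]].
      exists U, V. repeat split; auto.
      intros y1 y2 Uy1 Vy2. exists U, V. auto.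
    + apply functional_extensionality; intros [a b].
      apply propositional_extensionality; split.
      * intros Wab.
        destruct (hW (a, b) Wab)
          as [U' [V' [[U [oU ->]] [[V [oV ->]] [Ua [Vb h]]]]]].
        exists U, V. auto.
      * intros [U [V [_ [_ [Ua [Vb h]]]]]]. apply h; auto.
  - intros [W' [oW' ->]] [a b] Wab.
    destruct (oW' _ Wab) as [U [V [oU [oV [Ua [Vb h]]]]]].
    exists (fun x => U (f1 x)), (fun y => V (f2 y)).
    split; [exists U; auto |]. split; [exists V; auto |].
    split; [exact Ua |]. split; [exact Vb |].
    intros x y Ux Vy. apply h; auto.
Qed.

Lemma top_join_initial {T B : Type} (f : T -> B) (O1 O2 : topology_on B) :
  top_join (initial_top f O1) (initial_top f O2) = initial_top f (top_join O1 O2).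
Proof. unfold top_join. rewrite prod_top_initial, <- !initial_top_comp. reflexivity. Qed.

Lemma initial_group_top {G K : group} {O : topology_on K} {f : G -> K} :
  is_hom f -> group_topology O -> group_topology (initial_top f O).
Proof.
  intros hf [[hT [hI hU]] [hM hV]].
  split; [split; [| split] | split].
  - exists (fun _ => True); auto.
  - intros U V [U' [oU ->]] [V' [oV ->]].
    exists (fun x => U' x /\ V' x). auto.
  - intros I U hUi.
    set (J := {i : I & {V : K -> Prop | O V /\ U i = (fun a => V (f a))}}).
    exists (fun k => exists j : J, proj1_sig (projT2 j) k). split.
    + apply (hU J (fun j => proj1_sig (projT2 j))).
      intros j. exact (proj1 (proj2_sig (projT2 j))).
    + apply functional_extensionality; intros a.
      apply propositional_extensionality; split.
      * intros [i Uia]. destruct (hUi i) as [V [oV e]].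
        exists (existT _ i (exist _ V (conj oV e))). simpl.
        rewrite e in Uia. exact Uia.
      * intros [[i [V [oV e]]] Vfa]. exists i. rewrite e. exact Vfa.
  - intros x y W [W' [oW ->]] Wxy. rewrite hf in Wxy.
    destruct (hM _ _ _ oW Wxy) as [U [V [oU [oV [Ux [Vy h]]]]]].
    exists (fun a => U (f a)), (fun b => V (f b)).
    split; [exists U; auto |]. split; [exists V; auto |].
    split; [exact Ux |]. split; [exact Vy |].
    intros a b Ua Vb. rewrite hf. auto.
  - intros W [W' [oW ->]]. exists (fun k => W' (ginv k)). split; [apply hV, oW |].
    apply functional_extensionality; intros a. rewrite (homV hf). reflexivity.
Qed.

Lemma connected_image {A B : Type} {OA : topology_on A} {OB : topology_on B}
  {f : A -> B} {S : A -> Prop} :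
  continuous_map OA OB f -> connected_set OA S ->
  connected_set OB (fun y => exists x, S x /\ f x = y).
Proof.
  intros hf hS
    [U [V [oU [oV [cov [[y1 [[x1 [Sx1 <-]] U1]] [[y2 [[x2 [Sx2 <-]] V2]] disj]]]]]]].
  apply hS. exists (fun x => U (f x)), (fun x => V (f x)).
  split; [apply hf, oU |]. split; [apply hf, oV |].
  split; [intros x Sx; apply cov; exists x; auto |].
  split; [exists x1; auto |]. split; [exists x2; auto |].
  intros x Sx. apply disj. exists x; auto.
Qed.

Lemma hausdorff_continuous_eq {A B : Type} {OA : topology_on A} {OB : topology_on B}
  {f : A -> B} {a b : A} :
  hausdorff OB -> continuous_map OA OB f ->
  (forall U, OA U -> U a -> U b) -> f a = f b.
Proof.
  intros hB hf hab. apply NNPP; intros ne.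
  destruct (hB _ _ ne) as [U [V [oU [oV [Ufa [Vfb disj]]]]]].
  apply (disj (f b)); [exact (hab _ (hf U oU) Ufa) | exact Vfb].
Qed.

Lemma hom_trivial_on_identity_component {G K : group} {tauG : topology_on G}
  {OK : topology_on K} {f : G -> K} :
  is_hom f -> continuous_map tauG OK f -> totally_disconnected OK ->
  forall x, identity_component tauG x -> f x = gone.
Proof.
  intros hf hc htd x [S [hS [S1 Sx]]]. rewrite <- (hom1 hf).
  apply (htd _ (connected_image hc hS)); [exists x | exists gone]; auto.
Qed.

Lemma lc_completion_group_topology {G : group} {tau : topology_on G}
  {H : topgroup} {eta : G -> H} :
  is_lc_completion tau H eta -> group_topology tau.
Proof. intros [[hH _] [heta [_ [_ ->]]]]. apply initial_group_top; assumption. Qed.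

Lemma lc_completion_comp {A B : group} {f : A -> B} {sigma : topology_on B}
  {H : topgroup} {g : B -> H} :
  is_hom f -> Surjective f -> is_lc_completion sigma H g ->
  is_lc_completion (initial_top f sigma) H (fun a => g (f a)).
Proof.
  intros hf fsurj [hH [hg [hc [hd hsigma]]]].
  split; [exact hH |]. split; [| split; [| split]].
  - intros x y. rewrite hf. apply hg.
  - intros V oV. exists (fun b => V (g b)). split; [apply hc, oV | reflexivity].
  - intros V oV hne. destruct (hd V oV hne) as [b Vgb].
    destruct (fsurj b) as [a <-]. exists a. exact Vgb.
  - rewrite hsigma. symmetry. apply initial_top_comp.
Qed.

Lemma lc_completion_factor {A B : group} {f : A -> B} {tau : topology_on A}
  {H : topgroup} {g : B -> H} :
  is_hom f -> Surjective f -> is_lc_completion tau H (fun a => g (f a)) ->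
  is_lc_completion (initial_top g (topen H)) H g.
Proof.
  intros hf fsurj [hH [hgf [_ [hd _]]]].
  split; [exact hH |]. split; [| split; [| split]].
  - intros x y. destruct (fsurj x) as [a <-], (fsurj y) as [b <-].
    rewrite <- hf. apply hgf.
  - intros V oV. exists V. auto.
  - intros V oV hne. destruct (hd V oV hne) as [a Va]. exists (f a). exact Va.
  - reflexivity.
Qed.

Section QuotientByIdentityComponent.
Context {G : group} {tauG : topology_on G} {Q : group} {qe : G -> Q}
  (hq_hom : is_hom qe) (hq_surj : Surjective qe)
  (hq_ker : forall x, qe x = gone <-> identity_component tauG x).

Lemma hom_factors_through_qe {K : group} {f : G -> K} {a b : G} :
  is_hom f -> (forall x, identity_component tauG x -> f x = gone) ->
  qe a = qe b -> f a = f b.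
Proof.
  intros hf hker e. apply (hom_eq_of_kernel hf), hker, hq_ker.
  exact (hom_kernel_of_eq hq_hom e).
Qed.

Lemma calT_td_open_saturated {tau : topology_on G} {U : G -> Prop} {a b : G} :
  calT_td tauG tau -> tau U -> qe a = qe b -> U a -> U b.
Proof.
  intros [_ [hc [H [eta [[_ [heta [hcont [_ htau]]]] htd]]]]] hU e.
  rewrite htau in hU. destruct hU as [V [_ ->]].
  assert (hcontG : continuous_map tauG (topen H) eta)
    by (intros V' oV'; apply hc, hcont, oV').
  rewrite (hom_factors_through_qe heta
             (hom_trivial_on_identity_component heta hcontG htd) e).
  auto.
Qed.

(* Any completion of tau factors, not only the totally disconnected one
   witnessing calT_td: it is Hausdorff and every tau-open set is saturated. *)
Lemma completion_factors_through_qe {tau : topology_on G} {H : topgroup}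
  {eta : G -> H} {a b : G} :
  calT_td tauG tau -> is_lc_completion tau H eta -> qe a = qe b -> eta a = eta b.
Proof.
  intros ht [[_ [hH _]] [_ [hcont _]]] e.
  apply (hausdorff_continuous_eq hH hcont). intros U hU.
  exact (calT_td_open_saturated ht hU e).
Qed.

Definition qsec (y : Q) : G :=
  proj1_sig (constructive_indefinite_description _ (hq_surj y)).

Lemma qe_qsec (y : Q) : qe (qsec y) = y.
Proof. exact (proj2_sig (constructive_indefinite_description _ (hq_surj y))). Qed.

Definition lift {K : Type} (eta : G -> K) : Q -> K := fun y => eta (qsec y).

Section Completion.
Context {tau : topology_on G} {H : topgroup} {eta : G -> H}
  (ht : calT_td tauG tau) (hcomp : is_lc_completion tau H eta).

Lemma lift_qe (x : G) : lift eta (qe x) = eta x.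
Proof. apply (completion_factors_through_qe ht hcomp), qe_qsec. Qed.

Lemma lift_qe_fun : (fun x => lift eta (qe x)) = eta.
Proof. apply functional_extensionality, lift_qe. Qed.

Lemma lift_completion : is_lc_completion (initial_top (lift eta) (topen H)) H (lift eta).
Proof.
  apply (lc_completion_factor (f := qe) (tau := tau)); [exact hq_hom | exact hq_surj |].
  rewrite lift_qe_fun. exact hcomp.
Qed.

Lemma calT_td_initial_lift : tau = initial_top qe (initial_top (lift eta) (topen H)).
Proof.
  rewrite <- initial_top_comp, lift_qe_fun. apply hcomp.
Qed.

Lemma quotient_top_calT_td : quotient_top qe tau = initial_top (lift eta) (topen H).
Proof. rewrite calT_td_initial_lift. apply quotient_initial_top, hq_surj. Qed.

Lemma completion_trivial_on_identity_component (x : G) :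
  identity_component tauG x -> eta x = gone.
Proof.
  intros hx. rewrite <- (hom1 (proj1 (proj2 hcomp))).
  apply (completion_factors_through_qe ht hcomp).
  rewrite (hom1 hq_hom). apply hq_ker, hx.
Qed.

Lemma lift_continuous : continuous_map (quotient_top qe tauG) (topen H) (lift eta).
Proof.
  intros V oV. unfold quotient_top.
  replace (fun a => V (lift eta (qe a))) with (fun a => V (eta a))
    by (apply functional_extensionality; intros a; rewrite lift_qe; reflexivity).
  destruct ht as [_ [hc _]]. apply hc, hcomp, oV.
Qed.

Lemma lift_unique {etat : Q -> H} : (forall x, etat (qe x) = eta x) -> etat = lift eta.
Proof.
  intros he. apply functional_extensionality; intros y.
  destruct (hq_surj y) as [x <-]. rewrite he, lift_qe. reflexivity.
Qed.

End Completion.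

Lemma calT_td_initial_quotient {tau : topology_on G} :
  calT_td tauG tau -> tau = initial_top qe (quotient_top qe tau).
Proof.
  intros ht. pose proof ht as [_ [_ [H [eta [hcomp _]]]]].
  rewrite (quotient_top_calT_td ht hcomp). exact (calT_td_initial_lift ht hcomp).
Qed.

Lemma calT_td_quotient_top {tau : topology_on G} :
  calT_td tauG tau -> calT_td (quotient_top qe tauG) (quotient_top qe tau).
Proof.
  intros ht. pose proof ht as [_ [hc [H [eta [hcomp htd]]]]].
  pose proof (lift_completion ht hcomp) as hlift.
  rewrite <- (quotient_top_calT_td ht hcomp) in hlift.
  split; [| split].
  - exact (lc_completion_group_topology hlift).
  - intros V hV. apply hc, hV.
  - exists H, (lift eta). auto.
Qed.

Lemma calT_td_initial_top {sigma : topology_on Q} :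
  calT_td (quotient_top qe tauG) sigma -> calT_td tauG (initial_top qe sigma).
Proof.
  intros [_ [hc [H [g [hcomp htd]]]]].
  pose proof (lc_completion_comp hq_hom hq_surj hcomp) as hcomp'.
  split; [exact (lc_completion_group_topology hcomp') |]. split.
  - intros U [V [oV ->]]. apply hc, oV.
  - exists H, (fun a => g (qe a)). auto.
Qed.

End QuotientByIdentityComponent.

Theorem proposition2p1
  (G : group) (tauG : topology_on G)
  (hG : lc_group (TopGroup tauG))
  (* the quotient G / G_e, given by a surjective homomorphism with kernel G_e *)
  (Q : group) (qe : G -> Q)
  (hq_hom : is_hom qe)
  (hq_surj : forall y : Q, exists x : G, qe x = y)
  (hq_ker : forall x : G, qe x = gone <-> identity_component tauG x) :
  let tauQ := quotient_top qe tauG in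
  exists F : topology_on G -> topology_on Q,
    (* for each tau in T_td(G) and its completion (G_tau, eta_tau) *)
    (forall tau, calT_td tauG tau ->
      forall (H : topgroup) (eta : G -> H), is_lc_completion tau H eta ->
        (forall x, identity_component tauG x -> eta x = gone) /\
        (exists etat : Q -> H,
           (is_hom etat /\ continuous_map tauQ (topen H) etat /\
            (forall x, etat (qe x) = eta x)) /\
           (forall etat' : Q -> H,
              is_hom etat' /\ continuous_map tauQ (topen H) etat' /\
              (forall x, etat' (qe x) = eta x) -> etat' = etat) /\
           (* tilde tau := coarsest topology making etat continuous *)
           F tau = initial_top etat (topen H) /\
           (* G_tau = (G/G_e)_{tilde tau} *)
           is_lc_completion (F tau) H etat)) /\
    (* tilde tau lies in T_td(G/G_e) *)
    (forall tau, calT_td tauG tau -> calT_td tauQ (F tau)) /\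
    (* tau |-> tilde tau is a bijection T_td(G) -> T_td(G/G_e) ... *)
    (forall tau1 tau2, calT_td tauG tau1 -> calT_td tauG tau2 ->
       F tau1 = F tau2 -> tau1 = tau2) /\
    (forall sigma, calT_td tauQ sigma -> exists tau, calT_td tauG tau /\ F tau = sigma) /\
    (* ... preserving joins *)
    (forall tau1 tau2, calT_td tauG tau1 -> calT_td tauG tau2 ->
       F (top_join tau1 tau2) = top_join (F tau1) (F tau2)).
Proof.
  intros tauQ. exists (quotient_top qe).
  split; [| split; [| split; [| split]]].
  - intros tau ht H eta hcomp. split.
    + exact (completion_trivial_on_identity_component hq_hom hq_ker ht hcomp).
    + exists (lift hq_surj eta).
      pose proof (quotient_top_calT_td hq_hom hq_surj hq_ker ht hcomp) as htilde.
      pose proof (lift_completion hq_hom hq_surj hq_ker ht hcomp) as hlift.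
      split; [split; [| split] | split; [| split]].
      * apply hlift.
      * exact (lift_continuous hq_hom hq_surj hq_ker ht hcomp).
      * exact (lift_qe hq_hom hq_surj hq_ker ht hcomp).
      * intros etat [_ [_ he]]. exact (lift_unique hq_hom hq_surj hq_ker ht hcomp he).
      * exact htilde.
      * rewrite htilde. exact hlift.
  - intros tau. exact (calT_td_quotient_top hq_hom hq_surj hq_ker).
  - intros tau1 tau2 h1 h2 e.
    rewrite (calT_td_initial_quotient hq_hom hq_surj hq_ker h1),
      (calT_td_initial_quotient hq_hom hq_surj hq_ker h2), e.
    reflexivity.
  - intros sigma hs. exists (initial_top qe sigma). split.
    + exact (calT_td_initial_top hq_hom hq_surj hs).
    + exact (quotient_initial_top hq_surj).
  - intros tau1 tau2 h1 h2.
    rewrite (calT_td_initial_quotient hq_hom hq_surj hq_ker h1) at 1.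
    rewrite (calT_td_initial_quotient hq_hom hq_surj hq_ker h2) at 1.
    rewrite top_join_initial. exact (quotient_initial_top hq_surj).
Qed.
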